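(* Let $0\le r\le n$. For each $0\le j\le r$, the operator $K_{rj}$ has order $r$, degree $-j$ and deficiency $r$ relative to $\mathcal P_n$. Conversely, if $L$ is a linear differential operator with polynomial coefficients of order $r$ and deficiency $r$ relative to $\mathcal P_n$ which has a degree $d$, then $d=-j$ for some $0\le j\le r$ and $L=a\,K_{rj}$ for some nonzero real constant $a$.
   Context: $D=d/dx$. For $s\ge0$, $\mathcal P_s$ is the space of real polynomials in $x$ of degree at most $s$, and $\mathcal P_s=\{0\}$ for $s<0$. A linear differential operator with polynomial coefficients is $L=\sum_{i=0}^r a_i(x)D^i$ with $a_i\in\mathbb R[x]$; its order is the largest $i$ with $a_i\ne0$. $L$ has degree $d\in\mathbb Z$ if there are real numbers $c_j$, not all zero, with $L[x^j]=c_jx^{j+d}$ for all $j\in\mathbb N$. $L$ has deficiency $m$ relative to $\mathcal P_n$ if $L(\mathcal P_n)\subset\mathcal P_{n-m}$ but $L(\mathcal P_n)\not\subset\mathcal P_{n-m-1}$. Pochhammer operator: $(a-xD)_k=(-1)^k(xD-a)(xD-(a-1))\cdots(xD-(a-k+1))$. For $0\le j\le r\le n$, $K_{rj}=\frac{1}{(r-j)!}(n-j-xD)_{r-j}D^j$. *)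

(* Differential operators with polynomial coefficients
   L = sum_i a_i(x) D^i are represented by their coefficient list,
   i.e. as elements of {poly {poly R}}: the outer variable stands for D,
   the coefficient of D^i is a_i(x) : {poly R}. *)
From HB Require Import structures.
From mathcomp Require Import all_boot all_order all_algebra.
From mathcomp Require Import reals.
Set Implicit Arguments. Unset Strict Implicit. Unset Printing Implicit Defensive.
Import Order.TTheory GRing.Theory Num.Theory.
Local Open Scope ring_scope.

Section DiffOps.
Variable R : realType.

Definition diffop := {poly {poly R}}.

Definition applyop (L : diffop) (p : {poly R}) : {poly R} :=
  \sum_(i < size L) L`_i * p^`(i).

(* Composition A o B, computed with the Leibniz rule
   D^i o b = sum_{l<=i} C(i,l) b^(l) D^(i-l). *)
Definition opmul (A B : diffop) : diffop :=
  \sum_(i < size A) \sum_(l < i.+1) \sum_(k < size B)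
     ((A`_i * ('C(i, l))%:R%:P * (B`_k)^`(l)) *: ('X^(i - l + k) : diffop)).

Definition xD : diffop := ('X : {poly R}) *: ('X : diffop).
Definition cst (c : R) : diffop := c%:P%:P.
Definition Dpow (j : nat) : diffop := 'X^j.

Fixpoint pochprod (a : R) (k : nat) : diffop :=
  match k with
  | 0 => 1
  | k'.+1 => opmul (pochprod a k') (xD - cst (a - k'%:R))
  end.

(* Pochhammer operator (a - xD)_k *)
Definition poch (a : R) (k : nat) : diffop := cst ((-1) ^+ k) * pochprod a k.

Definition Kop (n r j : nat) : diffop :=
  opmul (cst ((r - j)`!%:R)^-1 * poch (n%:R - j%:R) (r - j)) (Dpow j).

Definition has_order (L : diffop) (r : nat) : Prop :=
  L`_r != 0 /\ forall i, (r < i)%N -> L`_i = 0.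

(* degree d : L[x^j] = c_j x^(j+d) for all j, c not identically zero
   (when j + d < 0, the monomial x^(j+d) is not a polynomial, so c_j = 0) *)
Definition has_degree (L : diffop) (d : int) : Prop :=
  exists c : nat -> R, (exists j, c j != 0) /\
    forall j : nat, ((j%:Z + d < 0)%R -> c j = 0) /\
      applyop L 'X^j = c j *: 'X^(absz (j%:Z + d)).

Definition inP (s : int) (p : {poly R}) : Prop :=
  if (s < 0)%R then p = 0 else (size p <= (absz s).+1)%N.

Definition has_deficiency (L : diffop) (n : nat) (m : int) : Prop :=
  (forall p : {poly R}, (size p <= n.+1)%N -> inP (n%:Z - m) (applyop L p)) /\
  ~ (forall p : {poly R}, (size p <= n.+1)%N -> inP (n%:Z - m - 1) (applyop L p)).

End DiffOps.

From HB Require Import structures.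
From mathcomp Require Import all_boot all_order all_algebra.
From mathcomp Require Import reals.
From mathcomp Require Import zify ring.
Import Order.TTheory GRing.Theory Num.Theory.
Set Implicit Arguments. Unset Strict Implicit. Unset Printing Implicit Defensive.
Local Open Scope ring_scope.

(* An operator L = \sum_i a_i D^i of degree d has a_i = b_i x^(i+d), so it acts on
   monomials by L[x^m] = q(m) x^(m+d) for the symbol q = \sum_i b_i x(x-1)...(x-i+1),
   a polynomial of degree at most the order of L; and L is determined by its values
   on monomials.  On 0..n the symbol of K_rj is m^_j 'C(n-m, r-j): it vanishes at
   the r points 0..j-1 and n-r+j+1..n but not at n-r+j, which yields order r and
   deficiency r.  Conversely, the symbol of L vanishes at every m with m + d < 0,
   and deficiency r makes it vanish at every m <= n with m + d > n - r.  As a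
   nonzero polynomial of degree at most r has at most r roots, this rules out d > 0
   and d < -r, and for d = -j leaves only the multiples of the symbol of K_rj. *)

Section NatPoints.
Variable F : numDomainType.

Lemma poly_eq0_at_nats (p : {poly F}) (s : seq nat) :
  uniq s -> (size p <= size s)%N -> {in s, forall m, p.[m%:R] = 0} -> p = 0.
Proof.
move=> us sz ps; apply: (@roots_geq_poly_eq0 _ _ [seq m%:R | m <- s]).
- by apply/allP => _ /mapP[m sm ->]; apply/rootP/ps.
- by rewrite map_inj_uniq // => a b /eqP; rewrite eqr_nat => /eqP.
- by rewrite size_map.
Qed.

Definition ffpoly (i : nat) : {poly F} := \prod_(t < i) ('X - t%:R%:P).

Lemma ffpolyE i m : (ffpoly i).[m%:R] = (m ^_ i)%:R.
Proof.
elim: i => [|i IH]; first by rewrite /ffpoly big_ord0 hornerC ffactn0.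
rewrite /ffpoly big_ord_recr /= hornerM -/(ffpoly i) IH hornerXsubC ffactnSr natrM.
by case: (leqP i m) => [le_im | lt_mi]; [rewrite natrB | rewrite ffact_small ?mul0n ?mul0r].
Qed.

Lemma size_ffpoly i : size (ffpoly i) = i.+1.
Proof. by rewrite size_prod_XsubC [index_enum _]unlock -enumT size_enum_ord. Qed.

End NatPoints.

Section PolyDerivatives.
Variable F : comNzRingType.
Implicit Types p q : {poly F}.
Local Arguments derivn : simpl never.

Lemma derivn_comp m k p : p^`(m)^`(k) = p^`(k + m).
Proof. by rewrite /derivn iterD. Qed.

Lemma derivnM k p q :
  (p * q)^`(k) = \sum_(l < k.+1) (p^`(l) * q^`(k - l)) *+ 'C(k, l).
Proof.
elim: k => [|k IH]; first by rewrite big_ord1 /= bin0 mulr1n.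
have shift : \sum_(l < k.+1) p^`(l) * q^`((k - l).+1) *+ 'C(k, l) =
    p * q^`(k.+1) + \sum_(l < k.+1) p^`(l.+1) * q^`(k - l) *+ 'C(k, l.+1).
  rewrite big_ord_recl derivn0 subn0 bin0 mulr1n; congr (_ + _).
  rewrite [RHS]big_ord_recr /= bin_small // mulr0n addr0.
  by apply: eq_bigr => i _; rewrite /bump /= subnSK // ltn_ord.
rewrite derivnS IH raddf_sum /=.
under eq_bigr => l _ do rewrite derivMn derivM -!derivnS mulrnDl.
rewrite big_split /= shift [RHS]big_ord_recl derivn0 subn0 bin0 mulr1n.
under [X in _ = _ + X]eq_bigr => l _ do rewrite binS mulrnDr subSS.
rewrite big_split /= /bump.
under [X in _ = _ + (X + _)]eq_bigr => i _ do rewrite leq0n add1n.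
under [X in _ = _ + (_ + X)]eq_bigr => i _ do rewrite leq0n add1n.
ring.
Qed.

End PolyDerivatives.

Section Operators.
Variable R : realType.
Implicit Types (L M A B : diffop R) (p q : {poly R}).

Fact applyop_is_linear L : linear (applyop L).
Proof.
move=> a p q; rewrite /applyop scaler_sumr -big_split; apply: eq_bigr => i _.
by rewrite linearP /= mulrDr scalerAr.
Qed.

HB.instance Definition _ L :=
  GRing.isLinear.Build R {poly R} {poly R} _ (applyop L) (applyop_is_linear L).

Lemma applyopE L p k : (size L <= k)%N ->
  applyop L p = \sum_(i < k) L`_i * p^`(i).
Proof.
move=> hk; rewrite /applyop (big_ord_widen _ (fun i => L`_i * p^`(i)) hk).
rewrite big_mkcond /=; apply: eq_bigr => i _.
by case: ltnP => // h; rewrite nth_default // mul0r.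
Qed.

Lemma applyop0 p : applyop 0 p = 0.
Proof. by rewrite /applyop size_poly0 big_ord0. Qed.

Lemma applyopD L M p : applyop (L + M) p = applyop L p + applyop M p.
Proof.
set N := maxn (size L) (size M).
rewrite !(applyopE _ (k := N)) ?leq_maxl ?leq_maxr ?size_polyD //.
by rewrite -big_split; apply: eq_bigr => i _; rewrite coefD mulrDl.
Qed.

Lemma applyopN L p : applyop (- L) p = - applyop L p.
Proof.
rewrite !(applyopE _ (k := size L)) ?size_polyN //.
by rewrite -sumrN; apply: eq_bigr => i _; rewrite coefN mulNr.
Qed.

Lemma applyopB L M p : applyop (L - M) p = applyop L p - applyop M p.
Proof. by rewrite applyopD applyopN. Qed.

Lemma applyopZ (c : R) L p : applyop (c%:P *: L) p = c *: applyop L p.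
Proof.
rewrite !(applyopE _ (k := size L)) ?size_scale_leq // scaler_sumr.
by apply: eq_bigr => i _; rewrite coefZ mul_polyC scalerAl.
Qed.

Lemma applyop_sum (I : Type) (s : seq I) (P : pred I) (F : I -> diffop R) p :
  applyop (\sum_(i <- s | P i) F i) p = \sum_(i <- s | P i) applyop (F i) p.
Proof.
apply: (big_morph (fun L => applyop L p)); first by move=> L M; apply: applyopD.
exact: applyop0.
Qed.

Lemma applyop_scaleXn (a : {poly R}) N p : applyop (a *: 'X^N) p = a * p^`(N).
Proof.
rewrite (applyopE _ (k := N.+1)); last first.
  by rewrite (leq_trans (size_scale_leq _ _)) // size_polyXn.
rewrite big_ord_recr /= big1 ?add0r; first by rewrite coefZ coefXn eqxx mulr1.
by move=> i _; rewrite coefZ coefXn ltn_eqF ?mulr0 ?mul0r.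
Qed.

Lemma applyop_opmul A B p : applyop (opmul A B) p = applyop A (applyop B p).
Proof.
rewrite /opmul applyop_sum {2}/applyop; apply: eq_bigr => i _.
rewrite applyop_sum /applyop raddf_sum /= mulr_sumr.
under [RHS]eq_bigr => k _ do rewrite derivnM mulr_sumr.
rewrite (exchange_big_dep predT) //=; apply: eq_bigr => l _.
rewrite -/(applyop _ _) applyop_sum; apply: eq_bigr => k _.
rewrite applyop_scaleXn derivn_comp polyC_natr -mulr_natr.
ring.
Qed.

Lemma applyop_cst c p : applyop (cst c) p = c *: p.
Proof.
have -> : cst c = c%:P *: 'X^0 by rewrite expr0 -mul_polyC mulr1.
by rewrite applyop_scaleXn mul_polyC.
Qed.

Lemma applyop1 p : applyop 1 p = p.
Proof. by rewrite -[1]polyC1 -polyC1 -/(cst 1) applyop_cst scale1r. Qed.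

Lemma applyop_cstM c L p : applyop (cst c * L) p = c *: applyop L p.
Proof. by rewrite /cst mul_polyC applyopZ. Qed.

Lemma applyop_Dpow j p : applyop (Dpow R j) p = p^`(j).
Proof. by rewrite /Dpow -[X in applyop X]scale1r applyop_scaleXn mul1r. Qed.

Lemma applyop_xD m : applyop (xD R) 'X^m = m%:R *: 'X^m.
Proof.
rewrite /xD -[X in _ *: X]expr1 applyop_scaleXn derivn1 derivXn.
by case: m => [|m]; rewrite ?mulr0n ?mulr0 ?scale0r // -scaler_nat -scalerAr -exprS.
Qed.

Lemma applyop_pochprod a k s : applyop (pochprod a k) 'X^s =
  (\prod_(t < k) (s%:R - (a - t%:R))) *: 'X^s :> {poly R}.
Proof.
elim: k => [|k IH]; first by rewrite /= big_ord0 scale1r applyop1.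
rewrite /= applyop_opmul applyopB applyop_xD applyop_cst -scalerBl linearZ /= IH.
by rewrite scalerA big_ord_recr /= mulrC.
Qed.

Lemma applyop_poch a k s : applyop (poch a k) 'X^s =
  ((-1) ^+ k * \prod_(t < k) (s%:R - (a - t%:R))) *: 'X^s :> {poly R}.
Proof. by rewrite /poch applyop_cstM applyop_pochprod scalerA. Qed.

Lemma size_opmul A B : (size (opmul A B) <= (size A + size B).-1)%N.
Proof.
apply: leq_trans (size_sum _ _ _) _; apply/bigmax_leqP => i _.
apply: leq_trans (size_sum _ _ _) _; apply/bigmax_leqP => l _.
apply: leq_trans (size_sum _ _ _) _; apply/bigmax_leqP => k _.
apply: leq_trans (size_scale_leq _ _) _; rewrite size_polyXn.
by have := ltn_ord i; have := ltn_ord k; have := ltn_ord l; lia.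
Qed.

Lemma size_pochprod (a : R) k : (size (pochprod a k) <= k.+1)%N.
Proof.
elim: k => [|k IH] /=; first by rewrite size_poly1.
have size_xD_sub : (size (xD R - cst (a - k%:R))%R <= 2)%N.
  rewrite (leq_trans (size_polyD _ _)) // geq_max size_polyN.
  rewrite (leq_trans (size_polyC_leq1 _)) // andbT.
  by rewrite (leq_trans (size_scale_leq _ _)) // size_polyX.
by apply: leq_trans (size_opmul _ _) _; lia.
Qed.

Lemma size_cstM c L : (size (cst c * L)%R <= size L)%N.
Proof. by rewrite /cst mul_polyC size_scale_leq. Qed.

Lemma size_Kop n r j : (j <= r)%N -> (size (Kop R n r j) <= r.+1)%N.
Proof.
move=> le_jr.
have size_poch :
    (size (cst ((r - j)`!%:R^-1 : R) * poch (n%:R - j%:R) (r - j))%R <= (r - j).+1)%N.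
  by rewrite (leq_trans (size_cstM _ _)) // /poch (leq_trans (size_cstM _ _)) // size_pochprod.
by apply: leq_trans (size_opmul _ _) _; rewrite /Dpow size_polyXn; lia.
Qed.

Lemma diffop_eq_monomial L M : (forall m, applyop L 'X^m = applyop M 'X^m) -> L = M.
Proof.
move=> eqLM; apply/eqP; rewrite -subr_eq0; apply/eqP; set N := L - M.
have N0 m : applyop N 'X^m = 0 by rewrite applyopB eqLM subrr.
apply/polyP => i; rewrite coef0; elim/ltn_ind: i => i IH.
have lt_i : (i < size N + i.+1)%N by rewrite addnS ltnS leq_addl.
have := N0 i; rewrite (applyopE _ (k := (size N + i.+1)%N)) ?leq_addr //.
rewrite (bigD1 (Ordinal lt_i)) //= big1 ?addr0 => [|k neq_ki]; last first.
  rewrite derivnXn; case: (ltnP k i) => [lt_ki | le_ik]; first by rewrite IH // mul0r.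
  move: neq_ki; rewrite -val_eqE /= => neq_ki.
  have lt_ik : (i < k)%N by rewrite ltn_neqAle eq_sym neq_ki le_ik.
  by rewrite ffact_small // mulr0n mulr0.
rewrite derivnXn subnn ffactnn expr0 mulrnAr mulr1 => /eqP.
by rewrite -scaler_nat scaler_eq0 pnatr_eq0 (negbTE (lt0n_neq0 (fact_gt0 i))) => /eqP.
Qed.

End Operators.

Section Symbol.
Variable R : realType.
Implicit Types (L : diffop R) (p q : {poly R}).

(* [has_degree L d] unfolds to [exists c, (exists m, c m != 0) /\ has_degree_with L d c]. *)
Definition has_degree_with L (d : int) (c : nat -> R) : Prop :=
  forall m : nat, ((m%:Z + d < 0) -> c m = 0) /\
    applyop L 'X^m = c m *: 'X^(absz (m%:Z + d)).

Lemma has_degree_with_ge0 L d c m : has_degree_with L d c -> c m != 0 -> 0 <= m%:Z + d.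
Proof. by move=> hc cm_nz; rewrite leNgt; apply: contra cm_nz => /(hc m).1 ->. Qed.

(* [b_i], the coefficient of [x^(i+d)] in [a_i], is all of [a_i] when [L] has degree [d]. *)
Definition symbol L (d : int) : {poly R} :=
  \sum_(i < size L)
    (if 0 <= i%:Z + d then (L`_i)`_(absz (i%:Z + d)) else 0) *: ffpoly R i.

Lemma size_symbol L d : (size (symbol L d) <= size L)%N.
Proof.
apply: leq_trans (size_sum _ _ _) _; apply/bigmax_leqP => i _.
by rewrite (leq_trans (size_scale_leq _ _)) // size_ffpoly.
Qed.

Lemma has_degree_with_symbol L d c :
  has_degree_with L d c -> forall m, c m = (symbol L d).[m%:R].
Proof.
move=> hc m; have [cm0 Lm] := hc m.
rewrite horner_sum; under eq_bigr => i _ do rewrite hornerZ ffpolyE.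
have [lt_md0 | ge_md0] := ltP (m%:Z + d) 0.
  rewrite cm0 //; symmetry; apply: big1 => i _; case: leP => [le0 | _]; last by rewrite mul0r.
  by rewrite ffact_small ?mulr0 //; lia.
have <- : (applyop L 'X^m)`_(absz (m%:Z + d)) = c m by rewrite Lm coefZ coefXn eqxx mulr1.
rewrite /applyop coef_sum; apply: eq_bigr => i _.
rewrite derivnXn mulrnAr coefMn coefMXn mulr_natr.
case: (leqP i m) => [le_im | lt_mi]; last by rewrite ffact_small // !mulr0n.
case: leP => [le0 | lt0]; last by rewrite ifT ?mul0rn //; lia.
by rewrite ifF; [congr (_`_ _ *+ _); lia | apply/negbTE; lia].
Qed.

Lemma inP0 s : inP s (0 : {poly R}).
Proof. by rewrite /inP; case: ifP; rewrite ?size_poly0. Qed.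

Lemma inP_sum s (I : finType) (F : I -> {poly R}) :
  (forall i, inP s (F i)) -> inP s (\sum_i F i).
Proof.
move=> hF; apply: (big_ind (inP s)); [exact: inP0 | | by move=> i _; apply: hF].
move=> p q; rewrite /inP; case: ifP => _; first by move=> -> ->; rewrite addr0.
by move=> hp hq; rewrite (leq_trans (size_polyD _ _)) // geq_max hp hq.
Qed.

Lemma image_inP_iff L d c n s : has_degree_with L d c ->
  (forall p, (size p <= n.+1)%N -> inP s (applyop L p)) <->
  (forall m, (m <= n)%N -> c m != 0 -> m%:Z + d <= s).
Proof.
move=> hc; split => [hP m le_mn cm_nz | hb p size_p].
  have [_ Lm] := hc m; have ge0 := has_degree_with_ge0 hc cm_nz.
  have := hP 'X^m; rewrite size_polyXn ltnS Lm => /(_ le_mn); rewrite /inP.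
  case: (ltP s 0) => [_ /eqP | ge_s].
    by rewrite scaler_eq0 (negbTE cm_nz) -size_poly_eq0 size_polyXn.
  by rewrite size_scale // size_polyXn ltnS; lia.
rewrite -[p]coefK poly_def linear_sum /=; apply: inP_sum => -[m lt_m] /=.
rewrite linearZ /= (hc m).2 scalerA.
have [-> | cm_nz] := eqVneq (c m) 0; first by rewrite mulr0 scale0r; apply: inP0.
have ge0 := has_degree_with_ge0 hc cm_nz.
have le_s : m%:Z + d <= s by apply: hb cm_nz; rewrite -ltnS (leq_trans lt_m).
rewrite /inP ltNge (le_trans ge0 le_s) /=.
by rewrite (leq_trans (size_scale_leq _ _)) // size_polyXn; lia.
Qed.

End Symbol.

Section Kop.
Variable R : realType.
Variables n r j : nat.

(* For [m <= n] its value at [m] is [m ^_ j * 'C(n - m, r - j)]. *)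
Definition Ksymbol : {poly R} :=
  ((-1) ^+ (r - j) / (r - j)`!%:R) *:
    (ffpoly R j * \prod_(t < r - j) ('X - (n%:R - t%:R)%:P)).

Lemma Ksymbol_eval m : Ksymbol.[m%:R] =
  (-1) ^+ (r - j) / (r - j)`!%:R * (m ^_ j)%:R * \prod_(t < r - j) (m%:R - (n%:R - t%:R)).
Proof.
rewrite hornerZ hornerM ffpolyE horner_prod mulrA.
by under eq_bigr => t _ do rewrite hornerXsubC.
Qed.

Lemma applyop_Kop m : applyop (Kop R n r j) 'X^m = Ksymbol.[m%:R] *: 'X^(m - j).
Proof.
rewrite /Kop applyop_opmul applyop_Dpow derivnXn raddfMn /= applyop_cstM applyop_poch.
rewrite -scaler_nat !scalerA Ksymbol_eval; congr (_ *: _).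
case: (leqP j m) => [le_jm | lt_mj]; last by rewrite ffact_small // !(mulr0, mul0r).
have -> : \prod_(t < r - j) ((m - j)%:R - (n%:R - j%:R - t%:R)) =
          \prod_(t < r - j) (m%:R - (n%:R - t%:R)) :> R.
  by apply: eq_bigr => t _; rewrite natrB //; ring.
ring.
Qed.

Lemma Ksymbol_root_low m : (m < j)%N -> Ksymbol.[m%:R] = 0.
Proof. by move=> lt_mj; rewrite Ksymbol_eval ffact_small // mulr0 mul0r. Qed.

Definition Kroots : seq nat := iota 0 j ++ iota (n - r + j).+1 (r - j).

Lemma uniq_Kroots : uniq Kroots.
Proof. by rewrite cat_uniq !iota_uniq andbT /=; apply/hasPn => m; rewrite !mem_iota; lia. Qed.

Hypotheses (le_jr : (j <= r)%N) (le_rn : (r <= n)%N).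

Lemma size_Ksymbol : (size Ksymbol <= r.+1)%N.
Proof.
rewrite (leq_trans (size_scale_leq _ _)) // (leq_trans (size_polyMleq _ _)) //.
by rewrite size_ffpoly size_prod_XsubC [index_enum _]unlock -enumT size_enum_ord; lia.
Qed.

Lemma Ksymbol_root_high m : (n - r + j < m <= n)%N -> Ksymbol.[m%:R] = 0.
Proof.
move=> /andP[lt_m le_mn]; have lt_t : (n - m < r - j)%N by lia.
rewrite Ksymbol_eval (bigD1 (Ordinal lt_t)) //= -natrB ?leq_subr // subKn //.
by rewrite subrr mul0r mulr0.
Qed.

Lemma Ksymbol_neq0 : Ksymbol.[(n - r + j)%:R] != 0.
Proof.
rewrite Ksymbol_eval !mulf_neq0 ?signr_eq0 ?invr_eq0 ?pnatr_eq0 -?lt0n ?fact_gt0 //.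
  by rewrite ffact_gt0; lia.
apply/prodf_neq0 => -[t lt_t] _ /=.
by rewrite subr_eq0 -natrB ?eqr_nat; lia.
Qed.

Lemma mem_Kroots m : (m \in Kroots) = (m < j)%N || (n - r + j < m <= n)%N.
Proof. by rewrite mem_cat !mem_iota; lia. Qed.

Lemma size_Kroots : size Kroots = r.
Proof. by rewrite size_cat !size_iota; lia. Qed.

Lemma Ksymbol_Kroots : {in Kroots, forall m, Ksymbol.[m%:R] = 0}.
Proof.
move=> m; rewrite mem_Kroots => /orP[];
  [exact: Ksymbol_root_low | exact: Ksymbol_root_high].
Qed.

Lemma eq_scale_Ksymbol (p : {poly R}) : (size p <= r.+1)%N ->
  {in Kroots, forall m, p.[m%:R] = 0} ->
  p = (p.[(n - r + j)%:R] / Ksymbol.[(n - r + j)%:R]) *: Ksymbol.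
Proof.
move=> size_p p0; apply/eqP; rewrite -subr_eq0; apply/eqP.
apply: (@poly_eq0_at_nats _ _ ((n - r + j)%N :: Kroots)).
- by rewrite /= uniq_Kroots mem_Kroots andbT; lia.
- rewrite /= size_Kroots (leq_trans (size_polyD _ _)) // size_polyN geq_max size_p.
  by rewrite (leq_trans (size_scale_leq _ _)) // size_Ksymbol.
- move=> m; rewrite inE hornerD hornerN hornerZ => /predU1P[-> | Km].
    by rewrite mulfVK ?subrr // Ksymbol_neq0.
  by rewrite (p0 _ Km) (Ksymbol_Kroots Km) mulr0 subrr.
Qed.

Lemma Kop_has_degree_with : has_degree_with (Kop R n r j) (- j%:Z) (fun m => Ksymbol.[m%:R]).
Proof.
move=> m; split => [lt0 | ]; first by apply: Ksymbol_root_low; lia.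
rewrite applyop_Kop; case: (leqP j m) => [le_jm | lt_mj].
  by congr (_ *: 'X^_); lia.
by rewrite Ksymbol_root_low // !scale0r.
Qed.

Lemma Kop_has_order : has_order (Kop R n r j) r.
Proof.
have size_K := size_Kop R n le_jr.
split => [|i lt_ri]; last exact: nth_default (leq_trans size_K lt_ri).
apply/eqP => Kr0; set Q := symbol (Kop R n r j) (- j%:Z).
have size_Q : (size Q <= size Kroots)%N.
  rewrite size_Kroots // (leq_trans (size_symbol _ _)) //.
  apply/leq_sizeP => i; rewrite leq_eqVlt => /predU1P[<- // | lt_ri].
  exact: nth_default (leq_trans size_K lt_ri).
have eqKQ := has_degree_with_symbol Kop_has_degree_with.
have Q0 : Q = 0.
  apply: (poly_eq0_at_nats _ size_Q) => [|m Km]; first exact: uniq_Kroots.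
  by rewrite -eqKQ (Ksymbol_Kroots Km).
by move: Ksymbol_neq0; rewrite eqKQ -/Q Q0 horner0 eqxx.
Qed.

Lemma Kop_has_degree : has_degree (Kop R n r j) (- j%:Z).
Proof.
exists (fun m => Ksymbol.[m%:R]); split; last exact: Kop_has_degree_with.
by exists (n - r + j)%N; apply: Ksymbol_neq0.
Qed.

Lemma Kop_has_deficiency : has_deficiency (Kop R n r j) n r%:Z.
Proof.
rewrite /has_deficiency !(image_inP_iff _ _ Kop_has_degree_with); split.
  move=> m le_mn; case: (ltnP (n - r + j) m) => [lt_m | le_m]; last by lia.
  by rewrite Ksymbol_root_high ?eqxx ?lt_m.
by move=> /(_ (n - r + j)%N _ Ksymbol_neq0); lia.
Qed.

End Kop.

Section Converse.
Variable R : realType.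
Variables (n r : nat) (L : diffop R) (d : int) (c : nat -> R).
Hypotheses (le_rn : (r <= n)%N) (ordL : has_order L r)
  (defL : has_deficiency L n r%:Z) (degL : has_degree_with L d c)
  (c_nz : exists m, c m != 0).
Local Notation Q := (symbol L d).

Lemma size_symbol_le : (size Q <= r.+1)%N.
Proof.
apply: leq_trans (size_symbol _ _) _; apply/leq_sizeP => i lt_ri.
exact: ordL.2.
Qed.

Lemma symbol_neq0 : Q != 0.
Proof.
by have [m] := c_nz; apply: contraNneq => Q0; rewrite (has_degree_with_symbol degL) Q0 horner0.
Qed.

Lemma symbol_root m :
  (m%:Z + d < 0) || (m <= n)%N && (n%:Z - r%:Z < m%:Z + d) -> Q.[m%:R] = 0.
Proof.
rewrite -(has_degree_with_symbol degL) => /orP[/(degL m).1 // | /andP[le_mn lt_m]].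
apply/eqP; apply: contraTT lt_m => cm_nz; rewrite -leNgt.
exact: (image_inP_iff _ _ degL).1 defL.1 m le_mn cm_nz.
Qed.

Lemma deficient_degree_bounds : - r%:Z <= d <= 0.
Proof.
have no_root_run a : ~ (forall m, (a <= m <= a + r)%N -> Q.[m%:R] = 0).
  move=> Q0; move/negP: symbol_neq0; apply; apply/eqP.
  apply: (poly_eq0_at_nats (iota_uniq a r.+1)); first by rewrite size_iota size_symbol_le.
  by move=> m; rewrite mem_iota => hm; apply: Q0; lia.
apply/andP; split; rewrite leNgt; apply/negP => lt_d.
  by apply: (no_root_run 0) => m hm; apply: symbol_root; apply/orP; left; lia.
apply: (no_root_run (n - r)%N) => m hm; apply: symbol_root.
by apply/orP; right; apply/andP; split; lia.
Qed.

Lemma deficient_eq_scale_Kop : exists a : R, a != 0 /\ L = a%:P *: Kop R n r `|d|.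
Proof.
have /andP[ge_d le_d] := deficient_degree_bounds.
set j := `|d|%N; have d_eq : d = - j%:Z by lia.
have le_jr : (j <= r)%N by lia.
have Q_Kroots : {in Kroots n r j, forall m, Q.[m%:R] = 0}.
  move=> m; rewrite mem_Kroots // => /orP[lt_mj | /andP[lt_m le_mn]]; apply: symbol_root.
    by apply/orP; left; lia.
  by apply/orP; right; apply/andP; split; lia.
have QK := eq_scale_Ksymbol le_jr le_rn size_symbol_le Q_Kroots.
set a := _ / _ in QK; exists a; split.
  by apply: contraNneq symbol_neq0 => a0; rewrite QK a0 scale0r.
apply: diffop_eq_monomial => m.
rewrite applyopZ applyop_Kop (degL m).2 (has_degree_with_symbol degL) QK hornerZ -scalerA.
case: (leqP j m) => [le_jm | lt_mj]; first by congr (_ *: (_ *: 'X^_)); lia.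
by rewrite (Ksymbol_root_low _ _ _ lt_mj) !scale0r.
Qed.

End Converse.

Theorem mainTheorem13 (R : realType) (n r : nat) (hrn : (r <= n)%N) :
  (forall j : nat, (j <= r)%N ->
     has_order (Kop R n r j) r /\
     has_degree (Kop R n r j) (- (j%:Z)) /\
     has_deficiency (Kop R n r j) n r%:Z) /\
  (forall (L : diffop R) (d : int),
     has_order L r -> has_deficiency L n r%:Z -> has_degree L d ->
     exists j : nat, (j <= r)%N /\ d = - (j%:Z) /\
       exists a : R, a != 0 /\ L = a%:P *: Kop R n r j).
Proof.
split=> [j le_jr | L d ordL defL [c [c_nz degL]]].
  split; [exact: Kop_has_order | split; [exact: Kop_has_degree | exact: Kop_has_deficiency]].
have /andP[ge_d le_d] := deficient_degree_bounds hrn ordL defL degL c_nz.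
exists `|d|%N; split; first by lia.
by split; [lia | exact: deficient_eq_scale_Kop hrn ordL defL degL c_nz].
Qed.
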